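(* For every $\varepsilon>0$ there is a constant $C_\varepsilon$ such that for every $n\geq 2$ and every pair of disjoint sets $\mathcal{A},\mathcal{B}\subseteq\{0,1\}^n$, there is a first-order sentence over $\tau_{\mathsf{string}}$ with at most $(1+\varepsilon)\frac{n}{\log_2 n}+C_\varepsilon$ quantifiers that is true in $\mathbf{B}_w$ for all $w\in\mathcal{A}$ and false in $\mathbf{B}_{w'}$ for all $w'\in\mathcal{B}$.
   Context: Vocabulary $\tau_{\mathsf{string}}=\langle <, S;\ \mathsf{min},\mathsf{max}\rangle$ with $<$ binary, $S$ unary, $\mathsf{min},\mathsf{max}$ constants. A string $w=w_1\cdots w_n\in\{0,1\}^n$ ($n\geq 1$) is encoded by the structure $\mathbf{B}_w$ with universe $\{1,\dots,n\}$, $<$ the usual order, $S=\{i: w_i=1\}$, $\mathsf{min}=1$, $\mathsf{max}=n$. The number of quantifiers is the number of quantifier occurrences. *)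

From Stdlib Require Import Reals List Arith.
Open Scope R_scope.

Inductive term : Type :=
| TVar : nat -> term
| TMin : term
| TMax : term.

Inductive formula : Type :=
| FTrue : formula
| FFalse : formula
| FLt : term -> term -> formula
| FEq : term -> term -> formula
| FS : term -> formula
| FNot : formula -> formula
| FAnd : formula -> formula -> formula
| FOr : formula -> formula -> formula
| FImp : formula -> formula -> formula
| FEx : nat -> formula -> formula
| FAll : nat -> formula -> formula.

Fixpoint quant_count (f : formula) : nat :=
  match f with
  | FTrue | FFalse | FLt _ _ | FEq _ _ | FS _ => 0
  | FNot g => quant_count g
  | FAnd g h | FOr g h | FImp g h => quant_count g + quant_count h
  | FEx _ g | FAll _ g => S (quant_count g)
  end.

Definition term_has_var (x : nat) (t : term) : Prop :=
  match t with TVar y => y = x | _ => False end.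

Fixpoint occurs_free (x : nat) (f : formula) : Prop :=
  match f with
  | FTrue | FFalse => False
  | FLt s t | FEq s t => term_has_var x s \/ term_has_var x t
  | FS t => term_has_var x t
  | FNot g => occurs_free x g
  | FAnd g h | FOr g h | FImp g h => occurs_free x g \/ occurs_free x h
  | FEx y g | FAll y g => y <> x /\ occurs_free x g
  end.

Definition sentence (f : formula) : Prop := forall x, ~ occurs_free x f.

(* The structure B_w for w = w_1...w_n (w : list bool of length n):
   universe {1,...,n}, usual order, S = {i | w_i = 1}, min = 1, max = n. *)
Definition eval_term (w : list bool) (v : nat -> nat) (t : term) : nat :=
  match t with
  | TVar x => v x
  | TMin => 1%nat
  | TMax => length w
  end.

Definition in_S (w : list bool) (i : nat) : Prop := nth (i - 1) w false = true.

Definition update (v : nat -> nat) (x a : nat) : nat -> nat :=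
  fun y => if Nat.eqb y x then a else v y.

Fixpoint sat (w : list bool) (v : nat -> nat) (f : formula) : Prop :=
  match f with
  | FTrue => True
  | FFalse => False
  | FLt s t => (eval_term w v s < eval_term w v t)%nat
  | FEq s t => eval_term w v s = eval_term w v t
  | FS t => in_S w (eval_term w v t)
  | FNot g => ~ sat w v g
  | FAnd g h => sat w v g /\ sat w v h
  | FOr g h => sat w v g \/ sat w v h
  | FImp g h => sat w v g -> sat w v h
  | FEx x g => exists a, (1 <= a <= length w)%nat /\ sat w (update v x a) g
  | FAll x g => forall a, (1 <= a <= length w)%nat -> sat w (update v x a) g
  end.

(* Truth of a sentence in B_w (valuation irrelevant for sentences; we fix
   the default assignment to the element 1). *)
Definition holds (w : list bool) (f : formula) : Prop := sat w (fun _ => 1%nat) f.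

Definition log2R (x : R) : R := ln x / ln 2.

(* The sentence guesses the word with about n / log n existentially quantified positions:
   2^L - 1 reference positions 2, ..., 2^L and, for each chunk of L letters, one position
   with exactly as many reference positions at or below it as the binary value of the chunk.
   A quantifier-free matrix reads the word off the order type of these positions and tests
   membership in A; as an arbitrary Boolean combination of atoms it exists by Shannon
   expansion. It remains to check that the decoded word is the actual one. The word is cut
   into blocks of s letters whose first positions are guessed as well; a universally
   quantified u selects a block start, s existentially quantified cursors run through the
   block comparing letters, and one universally quantified probe forces consecutive cursors
   to be adjacent. This costs 2^L + n/L + n/s + s + O(1) quantifiers, which is at most
   (1 + eps) n / log n + O(1) for s = 2^L and L = log n - (log n)/q with q of order 1/eps. *)

From Stdlib Require Import Reals List Arith Lia Lra Classical FunctionalExtensionality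
  Morphisms_Prop.
Open Scope R_scope.
Open Scope nat_scope.

Ltac nat_cases :=
  repeat match goal with
  | |- context [?a <=? ?b] => destruct (Nat.leb_spec a b)
  | |- context [?a <? ?b] => destruct (Nat.ltb_spec a b)
  | |- context [?a =? ?b] => destruct (Nat.eqb_spec a b)
  end.

(** * Quantifier-free definability *)

Inductive atom : Type :=
| ALt : nat -> nat -> atom
| AMin : nat -> atom
| AMax : nat -> atom
| ASb : nat -> atom.

Definition atom_eq_dec (a b : atom) : {a = b} + {a <> b}.
Proof. decide equality; apply Nat.eq_dec. Defined.

Definition atom_formula (a : atom) : formula :=
  match a with
  | ALt x y => FLt (TVar x) (TVar y)
  | AMin x => FEq (TVar x) TMin
  | AMax x => FEq (TVar x) TMax
  | ASb x => FS (TVar x)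
  end.

Definition eval_atom (w : list bool) (v : nat -> nat) (a : atom) : bool :=
  match a with
  | ALt x y => v x <? v y
  | AMin x => v x =? 1
  | AMax x => v x =? length w
  | ASb x => nth (v x - 1) w false
  end.

Definition atom_below (K : nat) (a : atom) : Prop :=
  match a with
  | ALt x y => x < K /\ y < K
  | AMin x | AMax x | ASb x => x < K
  end.

Lemma sat_atom_formula w v a : sat w v (atom_formula a) <-> eval_atom w v a = true.
Proof.
  destruct a; simpl; unfold in_S; simpl;
    rewrite ?Nat.ltb_lt, ?Nat.eqb_eq; tauto.
Qed.

Lemma occurs_free_atom_formula K a x :
  atom_below K a -> occurs_free x (atom_formula a) -> x < K.
Proof. destruct a; simpl; unfold term_has_var; intuition (subst; lia). Qed.

Definition all_atoms (K : nat) : list atom :=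
  flat_map (fun x => ASb x :: AMin x :: AMax x :: map (ALt x) (seq 0 K)) (seq 0 K).

Lemma in_all_atoms K a : In a (all_atoms K) <-> atom_below K a.
Proof.
  unfold all_atoms; rewrite in_flat_map; split.
  - intros [x [Hx Ha]]; apply in_seq in Hx; simpl in Ha.
    destruct Ha as [<-|[<-|[<-|Ha]]]; simpl; try lia.
    apply in_map_iff in Ha; destruct Ha as [y [<- Hy]]; apply in_seq in Hy; simpl; lia.
  - destruct a as [x y|x|x|x]; simpl; intros Ha;
      [exists x | exists x | exists x | exists x]; rewrite in_seq; split; try lia; simpl;
      auto 6 using in_map, in_seq.
    right; right; right; apply in_map, in_seq; lia.
Qed.

Definition set_atom (a : atom) (b : bool) (f : atom -> bool) : atom -> bool :=
  fun c => if atom_eq_dec c a then b else f c.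

Lemma set_atom_id a f : set_atom a (f a) f = f.
Proof.
  apply functional_extensionality; intros c; unfold set_atom.
  destruct (atom_eq_dec c a); congruence.
Qed.

Definition shannon (a : atom) (F1 F0 : formula) : formula :=
  FOr (FAnd (atom_formula a) F1) (FAnd (FNot (atom_formula a)) F0).

Lemma sat_shannon w v a F1 F0 :
  sat w v (shannon a F1 F0) <-> if eval_atom w v a then sat w v F1 else sat w v F0.
Proof.
  simpl; rewrite sat_atom_formula.
  destruct (eval_atom w v a); intuition congruence.
Qed.

(* The predicate [g] need not be decidable: [classic] settles the empty case. *)
Lemma qf_definable_on (K : nat) (l : list atom) (g : (atom -> bool) -> Prop) :
  (forall a, In a l -> atom_below K a) ->
  (forall f f', (forall a, In a l -> f a = f' a) -> g f <-> g f') ->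
  exists F, quant_count F = 0 /\ (forall x, occurs_free x F -> x < K) /\
    forall w v, sat w v F <-> g (eval_atom w v).
Proof.
  revert g; induction l as [|a l IH]; intros g Hl Hg.
  - assert (Hconst : forall f, g f <-> g (fun _ => false)) by (intros f; apply Hg; intros a []).
    destruct (classic (g (fun _ => false))) as [H|H];
      [exists FTrue | exists FFalse];
      (split; [reflexivity | split; [simpl; tauto|]]);
      intros w v; rewrite Hconst; simpl; tauto.
  - assert (Hset : forall b, exists F, quant_count F = 0 /\
      (forall x, occurs_free x F -> x < K) /\
      forall w v, sat w v F <-> g (set_atom a b (eval_atom w v))).
    { intros b; apply (IH (fun f => g (set_atom a b f))).
      - intros c Hc; apply Hl; right; exact Hc.
      - intros f f' Hff'; apply Hg; intros c [Hc|Hc]; unfold set_atom;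
          destruct (atom_eq_dec c a); auto; congruence. }
    destruct (Hset true) as [F1 [Hq1 [Hfree1 Hsat1]]].
    destruct (Hset false) as [F0 [Hq0 [Hfree0 Hsat0]]].
    exists (shannon a F1 F0); split; [|split].
    + simpl; rewrite Hq1, Hq0; destruct a; reflexivity.
    + assert (Ha := occurs_free_atom_formula K a).
      simpl; intros x Hx; intuition (auto using Hl, in_eq).
    + intros w v; rewrite sat_shannon.
      destruct (eval_atom w v a) eqn:E; rewrite ?Hsat1, ?Hsat0, <- E, set_atom_id;
        reflexivity.
Qed.

Lemma qf_definable (K : nat) (g : (atom -> bool) -> Prop) :
  (forall f f', (forall a, atom_below K a -> f a = f' a) -> g f <-> g f') ->
  exists F, quant_count F = 0 /\ (forall x, occurs_free x F -> x < K) /\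
    forall w v, sat w v F <-> g (eval_atom w v).
Proof.
  intros Hg; apply (qf_definable_on K (all_atoms K)).
  - intros a Ha; apply in_all_atoms, Ha.
  - intros f f' Hff'; apply Hg; intros a Ha; apply Hff', in_all_atoms, Ha.
Qed.

Fixpoint exists_block (a k : nat) (F : formula) : formula :=
  match k with
  | O => F
  | S k' => FEx a (exists_block (S a) k' F)
  end.

Definition override (v : nat -> nat) (a k : nat) (g : nat -> nat) : nat -> nat :=
  fun x => if andb (a <=? x) (x <? a + k) then g x else v x.

Lemma override_0 v a g : override v a 0 g = v.
Proof.
  apply functional_extensionality; intros x; unfold override; nat_cases; simpl; lia || auto.
Qed.

Lemma override_S v a k g : override (update v a (g a)) (S a) k g = override v a (S k) g.
Proof.
  apply functional_extensionality; intros x; unfold override, update.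
  nat_cases; simpl; subst; auto; lia.
Qed.

Lemma override_ext v a k g g' :
  (forall x, a <= x < a + k -> g x = g' x) -> override v a k g = override v a k g'.
Proof.
  intros H; apply functional_extensionality; intros x; unfold override.
  nat_cases; simpl; auto; apply H; lia.
Qed.

Lemma sat_exists_block w k : forall a v F,
  sat w v (exists_block a k F) <->
  exists g, (forall x, a <= x < a + k -> 1 <= g x <= length w) /\
    sat w (override v a k g) F.
Proof.
  induction k as [|k IH]; intros a v F; simpl.
  - split.
    + intros H; exists (fun _ => 1); rewrite override_0; split; [lia | exact H].
    + intros [g [_ H]]; rewrite override_0 in H; exact H.
  - split.
    + intros [c [Hc H]]; apply IH in H; destruct H as [g [Hg H]].
      exists (update g a c); split.
      * intros x Hx; unfold update; nat_cases; [lia | apply Hg; lia].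
      * rewrite <- override_S; unfold update at 2; rewrite Nat.eqb_refl.
        erewrite override_ext; [exact H |].
        intros x Hx; unfold update; nat_cases; lia.
    + intros [g [Hg H]]; exists (g a); split; [apply Hg; lia |].
      apply IH; exists g; split; [intros x Hx; apply Hg; lia |].
      rewrite override_S; exact H.
Qed.

Lemma quant_count_exists_block a k F :
  quant_count (exists_block a k F) = k + quant_count F.
Proof. revert a; induction k; intros a; simpl; auto. Qed.

Lemma occurs_free_exists_block a k F x :
  occurs_free x (exists_block a k F) -> ~ (a <= x < a + k) /\ occurs_free x F.
Proof.
  revert a; induction k as [|k IH]; intros a H; simpl in H.
  - split; auto; lia.
  - destruct H as [H1 H2]; apply IH in H2; destruct H2; split; auto; lia.
Qed.

(** * The encoding sentence *)

Lemma lt_div_ceil i n s : s <> 0 -> i < (n + s - 1) / s <-> i * s < n.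
Proof.
  intros Hs; split; intros H.
  - assert (s * (i + 1) <= s * ((n + s - 1) / s)) by (apply Nat.mul_le_mono_l; lia).
    pose proof (Nat.Div0.mul_div_le (n + s - 1) s); nia.
  - enough (S i <= (n + s - 1) / s) by lia.
    apply Nat.div_le_lower_bound; [auto | nia].
Qed.

Lemma div_lt_div_ceil p n s : s <> 0 -> p < n -> p / s < (n + s - 1) / s.
Proof.
  intros Hs Hp; apply lt_div_ceil; auto.
  pose proof (Nat.Div0.mul_div_le p s); lia.
Qed.

Section Layout.
Variables n L s : nat.

(* Variables [0, n_pre) form the existential prefix: reference positions, then chunk digits,
   then block starts. Variable n_pre is u, followed by the s cursors and the probe. *)
Definition n_ref := 2 ^ L - 1.
Definition n_dig := (n + L - 1) / L.
Definition n_blk := (n + s - 1) / s.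
Definition n_pre := n_ref + n_dig + n_blk.
Definition dig_var j := n_ref + j.
Definition blk_var i := n_ref + n_dig + i.
Definition cur_var l := n_pre + 1 + l.
Definition probe_var := n_pre + 1 + s.
Definition n_vars := n_pre + s + 2.
Definition block_len i := Nat.min s (n - i * s).

Hypothesis Hs : 1 <= s.

Lemma block_len_bounds i : i < n_blk -> 1 <= block_len i <= s.
Proof. unfold n_blk; rewrite lt_div_ceil by lia; unfold block_len; lia. Qed.

Lemma block_len_inner i : i + 1 < n_blk -> block_len i = s.
Proof. unfold n_blk; rewrite lt_div_ceil by lia; unfold block_len; nia. Qed.

Lemma block_len_last i : i < n_blk -> n_blk <= i + 1 -> i * s + block_len i = n.
Proof.
  unfold n_blk; intros Hi Hl.
  assert (~ (i + 1) * s < n) by (rewrite <- lt_div_ceil; lia).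
  rewrite lt_div_ceil in Hi by lia; unfold block_len; nia.
Qed.

End Layout.

Section Matrix.
Variables (n L s : nat) (A : list bool -> Prop).
Context {X : Type} (lt : X -> X -> bool) (mem is_min is_max : X -> bool).

Definition digit_at (ref : nat -> X) (x : X) : nat :=
  length (filter (fun i => negb (lt x (ref i))) (seq 0 (n_ref L))).

Definition decode (ref dig : nat -> X) : list bool :=
  map (fun p => Nat.testbit (digit_at ref (dig (p / L))) (p mod L)) (seq 0 n).

Definition same (x z : X) : bool := negb (orb (lt x z) (lt z x)).

Definition adjacent_for (y x z : X) : Prop :=
  lt x z = true /\ ~ (lt x y = true /\ lt y z = true).

Definition block_ok (ref dig blk : nat -> X) (u : X) (cur : nat -> X) (y : X) (i : nat) :=
  same (cur 0) u = true /\
  (forall l, l + 1 < block_len n s i -> adjacent_for y (cur l) (cur (l + 1))) /\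
  (i + 1 < n_blk n s -> adjacent_for y (cur (block_len n s i - 1)) (blk (i + 1))) /\
  (n_blk n s <= i + 1 -> is_max (cur (block_len n s i - 1)) = true) /\
  (forall l, l < block_len n s i -> mem (cur l) = nth (i * s + l) (decode ref dig) false).

Definition matrix (ref dig blk : nat -> X) (u : X) (cur : nat -> X) (y : X) : Prop :=
  A (decode ref dig) /\ is_min (blk 0) = true /\
  forall i, i < n_blk n s -> same u (blk i) = true -> block_ok ref dig blk u cur y i.

Lemma decode_ext ref dig ref' dig' :
  1 <= L ->
  (forall i, i < n_ref L -> ref i = ref' i) -> (forall j, j < n_dig n L -> dig j = dig' j) ->
  decode ref dig = decode ref' dig'.
Proof.
  intros HL Href Hdig; apply map_ext_in; intros p Hp; apply in_seq in Hp.
  rewrite Hdig by (apply div_lt_div_ceil; lia).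
  unfold digit_at; do 2 f_equal; apply filter_ext_in.
  intros i Hi; apply in_seq in Hi; rewrite Href by lia; reflexivity.
Qed.

Hypotheses (HL : 1 <= L) (Hs : 1 <= s) (Hn : 1 <= n).

Lemma matrix_ext_impl ref dig blk cur ref' dig' blk' cur' u y :
  (forall i, i < n_ref L -> ref i = ref' i) -> (forall j, j < n_dig n L -> dig j = dig' j) ->
  (forall i, i < n_blk n s -> blk i = blk' i) -> (forall l, l < s -> cur l = cur' l) ->
  matrix ref dig blk u cur y -> matrix ref' dig' blk' u cur' y.
Proof.
  intros Href Hdig Hblk Hcur [HA [Hmin Hblocks]].
  assert (Hblk0 : 0 < n_blk n s) by (apply lt_div_ceil; lia).
  assert (Hdec : decode ref dig = decode ref' dig') by (apply decode_ext; auto).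
  split; [rewrite <- Hdec; exact HA | split; [rewrite <- Hblk; auto |]].
  intros i Hi Hu; rewrite <- Hblk in Hu by auto.
  pose proof (block_len_bounds n s Hs i Hi).
  destruct (Hblocks i Hi Hu) as [H0 [Hstep [Hnext [Hlast Hbits]]]].
  split; [|split; [|split; [|split]]].
  - rewrite <- Hcur by lia; exact H0.
  - intros l Hl; rewrite <- !Hcur by lia; auto.
  - intros Hi1; rewrite <- Hcur, <- Hblk by lia; auto.
  - intros Hi1; rewrite <- Hcur by lia; auto.
  - intros l Hl; rewrite <- Hcur, <- Hdec by lia; auto.
Qed.

Lemma matrix_ext ref dig blk cur ref' dig' blk' cur' u y :
  (forall i, i < n_ref L -> ref i = ref' i) -> (forall j, j < n_dig n L -> dig j = dig' j) ->
  (forall i, i < n_blk n s -> blk i = blk' i) -> (forall l, l < s -> cur l = cur' l) ->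
  matrix ref dig blk u cur y <-> matrix ref' dig' blk' u cur' y.
Proof.
  intros; split; apply matrix_ext_impl; intros; auto; symmetry; auto.
Qed.

End Matrix.

Section Sentence.
Variables (n L s : nat) (A : list bool -> Prop).

Definition prefix_matrix (w : list bool) (g1 : nat -> nat) (u : nat) (g2 : nat -> nat) (y : nat) :=
  matrix n L s A Nat.ltb (fun x => nth (x - 1) w false) (fun x => x =? 1) (fun x => x =? length w)
    g1 (fun j => g1 (dig_var L j)) (fun i => g1 (blk_var n L i)) u
    (fun l => g2 (cur_var n L s l)) y.

Lemma prefix_matrix_ext w g1 g1' u g2 g2' y :
  1 <= L -> 1 <= s -> 1 <= n ->
  (forall x, x < n_pre n L s -> g1 x = g1' x) ->
  (forall l, l < s -> g2 (cur_var n L s l) = g2' (cur_var n L s l)) ->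
  prefix_matrix w g1 u g2 y <-> prefix_matrix w g1' u g2' y.
Proof.
  intros HL Hs Hn H1 H2; apply matrix_ext; auto; intros; apply H1;
    unfold n_pre, dig_var, blk_var in *; lia.
Qed.

(* Clamping makes the matrix depend only on the atoms below n_vars, as [qf_definable] needs. *)
Definition clamp (x : nat) : nat := Nat.min x (n_vars n L s - 1).

Definition clamp_atom (a : atom) : atom :=
  match a with
  | ALt x z => ALt (clamp x) (clamp z)
  | AMin x => AMin (clamp x)
  | AMax x => AMax (clamp x)
  | ASb x => ASb (clamp x)
  end.

Definition symbolic_matrix (h : atom -> bool) : Prop :=
  matrix n L s A (fun x z => h (ALt x z)) (fun x => h (ASb x)) (fun x => h (AMin x))
    (fun x => h (AMax x)) (fun i => i) (dig_var L) (blk_var n L) (n_pre n L s)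
    (cur_var n L s) (probe_var n L s).

Lemma symbolic_matrix_local f f' :
  (forall a, atom_below (n_vars n L s) a -> f a = f' a) ->
  symbolic_matrix (fun a => f (clamp_atom a)) <-> symbolic_matrix (fun a => f' (clamp_atom a)).
Proof.
  intros H.
  replace (fun a => f (clamp_atom a)) with (fun a => f' (clamp_atom a)); [reflexivity |].
  apply functional_extensionality; intros a; symmetry; apply H.
  assert (clamp_lt : forall x, clamp x < n_vars n L s) by (intros; unfold clamp, n_vars; lia).
  destruct a; simpl; auto.
Qed.

Lemma symbolic_matrix_eval w V :
  symbolic_matrix (fun a => eval_atom w V (clamp_atom a)) <->
  prefix_matrix w (fun x => V (clamp x)) (V (clamp (n_pre n L s)))
    (fun x => V (clamp x)) (V (clamp (probe_var n L s))).
Proof. reflexivity. Qed.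

Definition encoding_sentence (F : formula) : formula :=
  exists_block 0 (n_pre n L s)
    (FAll (n_pre n L s) (exists_block (n_pre n L s + 1) s (FAll (probe_var n L s) F))).

Lemma sentence_encoding_sentence F :
  (forall x, occurs_free x F -> x < n_vars n L s) -> sentence (encoding_sentence F).
Proof.
  intros HF x Hx; unfold encoding_sentence in Hx.
  apply occurs_free_exists_block in Hx; destruct Hx as [Hx1 [Hx2 Hx]].
  apply occurs_free_exists_block in Hx; destruct Hx as [Hx3 [Hx4 Hx]].
  apply HF in Hx; unfold n_vars, probe_var in *; lia.
Qed.

Lemma quant_count_encoding_sentence F :
  quant_count F = 0 -> quant_count (encoding_sentence F) = n_vars n L s.
Proof.
  intros HF; unfold encoding_sentence; rewrite quant_count_exists_block; simpl.
  rewrite quant_count_exists_block; simpl; rewrite HF; unfold n_vars; lia.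
Qed.

Lemma final_valuation g1 u g2 y
  (V := update (override (update (override (fun _ => 1) 0 (n_pre n L s) g1) (n_pre n L s) u)
          (n_pre n L s + 1) s g2) (probe_var n L s) y) :
  (forall x, x < n_pre n L s -> V (clamp x) = g1 x) /\ V (clamp (n_pre n L s)) = u /\
  (forall l, l < s -> V (clamp (cur_var n L s l)) = g2 (cur_var n L s l)) /\
  V (clamp (probe_var n L s)) = y.
Proof.
  subst V; unfold update, override, clamp, cur_var, probe_var, n_vars.
  repeat split; intros; nat_cases; simpl; try lia; auto; f_equal; lia.
Qed.

Lemma holds_encoding_sentence F w :
  1 <= L -> 1 <= s -> 1 <= n ->
  (forall w V, sat w V F <-> symbolic_matrix (fun a => eval_atom w V (clamp_atom a))) ->
  holds w (encoding_sentence F) <->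
  exists g1, (forall x, x < n_pre n L s -> 1 <= g1 x <= length w) /\
    forall u, 1 <= u <= length w -> exists g2,
      (forall x, n_pre n L s + 1 <= x < n_pre n L s + 1 + s -> 1 <= g2 x <= length w) /\
      forall y, 1 <= y <= length w -> prefix_matrix w g1 u g2 y.
Proof.
  intros HL Hs Hn HF; unfold holds, encoding_sentence; rewrite sat_exists_block.
  apply ex_iff_morphism; intros g1.
  apply and_iff_morphism; [split; intros H x Hx; apply H; lia |].
  simpl; apply all_iff_morphism; intros u; apply imp_iff_compat_l.
  rewrite sat_exists_block; apply ex_iff_morphism; intros g2.
  apply and_iff_morphism; [reflexivity |].
  simpl; apply all_iff_morphism; intros y; apply imp_iff_compat_l.
  rewrite HF, symbolic_matrix_eval.
  destruct (final_valuation g1 u g2 y) as [H1 [H2 [H3 H4]]].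
  rewrite H2, H4; apply prefix_matrix_ext; auto.
Qed.

End Sentence.

Lemma same_ltb x z : same Nat.ltb x z = true <-> x = z.
Proof.
  unfold same; destruct (Nat.ltb_spec x z), (Nat.ltb_spec z x); simpl; split; lia || congruence.
Qed.

Lemma adjacent_for_ltb y x z : adjacent_for Nat.ltb y x z <-> x < z /\ ~ (x < y < z).
Proof. unfold adjacent_for; rewrite !Nat.ltb_lt; tauto. Qed.

Lemma adjacent_for_all_probes m x z :
  1 <= z <= m -> (forall y, 1 <= y <= m -> adjacent_for Nat.ltb y x z) -> z = S x.
Proof.
  intros Hz H.
  assert (Hxz : x < z) by (apply (adjacent_for_ltb z), H; lia).
  specialize (H (S x)).
  destruct (Nat.eq_dec z (S x)) as [E|E]; [exact E |].
  apply adjacent_for_ltb in H as [_ Hno]; [lia |]; lia.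
Qed.

Section Soundness.
Variables (n L s : nat) (A : list bool -> Prop) (w : list bool) (g1 : nat -> nat).
Hypotheses (Hs : 1 <= s) (Hn : 1 <= n).

Definition prefix_decode := decode n L Nat.ltb g1 (fun j => g1 (dig_var L j)).

Definition prefix_block_ok (u : nat) (g2 : nat -> nat) (y i : nat) :=
  block_ok n L s Nat.ltb (fun x => nth (x - 1) w false) (fun x => x =? length w)
    g1 (fun j => g1 (dig_var L j)) (fun i => g1 (blk_var n L i)) u
    (fun l => g2 (cur_var n L s l)) y i.

Section Block.
Variables (i u : nat) (g2 : nat -> nat).
Hypotheses (Hi : i < n_blk n s)
  (Hg2 : forall l, l < s -> 1 <= g2 (cur_var n L s l) <= n)
  (Hblock : forall y, 1 <= y <= n -> prefix_block_ok u g2 y i).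

Lemma cursors_consecutive l : l < block_len n s i -> g2 (cur_var n L s l) = u + l.
Proof.
  pose proof (block_len_bounds n s Hs i Hi).
  induction l as [|l IH]; intros Hl.
  - destruct (Hblock 1) as [H0 _]; [lia |]; apply same_ltb in H0; lia.
  - rewrite (adjacent_for_all_probes n (g2 (cur_var n L s l)) (g2 (cur_var n L s (S l))));
      [rewrite IH; lia | apply Hg2; lia |].
    intros y Hy; destruct (Hblock y Hy) as [_ [Hstep _]].
    replace (S l) with (l + 1) by lia; apply Hstep; lia.
Qed.

Lemma next_block_anchor :
  u = i * s + 1 -> (forall x, x < n_pre n L s -> 1 <= g1 x <= n) ->
  i + 1 < n_blk n s -> g1 (blk_var n L (i + 1)) = (i + 1) * s + 1.
Proof.
  intros Hu Hg1 Hi1.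
  rewrite (adjacent_for_all_probes n (g2 (cur_var n L s (block_len n s i - 1)))
             (g1 (blk_var n L (i + 1)))).
  - pose proof (block_len_bounds n s Hs i Hi).
    rewrite cursors_consecutive, block_len_inner by lia; lia.
  - apply Hg1; unfold blk_var, n_pre; lia.
  - intros y Hy; apply (Hblock y Hy), Hi1.
Qed.

Lemma block_bits l :
  u = i * s + 1 -> l < block_len n s i ->
  nth (i * s + l) w false = nth (i * s + l) prefix_decode false.
Proof.
  intros Hu Hl; destruct (Hblock 1) as [_ [_ [_ [_ Hbits]]]]; [lia |].
  unfold prefix_decode; rewrite <- (Hbits l Hl), cursors_consecutive by auto; f_equal; lia.
Qed.

End Block.

Lemma soundness :
  length w = n -> (forall x, x < n_pre n L s -> 1 <= g1 x <= n) ->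
  (forall u, 1 <= u <= n -> exists g2,
     (forall x, n_pre n L s + 1 <= x < n_pre n L s + 1 + s -> 1 <= g2 x <= n) /\
     forall y, 1 <= y <= n -> prefix_matrix n L s A w g1 u g2 y) ->
  A w.
Proof.
  intros Hw Hg1 H.
  destruct (H 1) as [g2 [_ Hy]]; [lia |].
  destruct (Hy 1) as [HA [Hmin _]]; [lia |].
  assert (Hblocks : forall i, i < n_blk n s -> g1 (blk_var n L i) = i * s + 1 ->
    exists g2, (forall l, l < s -> 1 <= g2 (cur_var n L s l) <= n) /\
      forall y, 1 <= y <= n -> prefix_block_ok (i * s + 1) g2 y i).
  { intros i Hi Hanchor; destruct (H (i * s + 1)) as [g2' [Hg2 Hy']].
    { apply lt_div_ceil in Hi; lia. }
    exists g2'; split; [intros l Hl; apply Hg2; unfold cur_var; lia |].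
    intros y Hyr; destruct (Hy' y Hyr) as [_ [_ Hb]]; apply Hb; [exact Hi |].
    apply same_ltb; auto. }
  assert (Hanchors : forall i, i < n_blk n s -> g1 (blk_var n L i) = i * s + 1).
  { induction i as [|i IH]; intros Hi.
    - apply Nat.eqb_eq in Hmin; lia.
    - destruct (Hblocks i) as [g2' [Hg2 Hb]]; [lia | apply IH; lia |].
      replace (S i) with (i + 1) by lia; apply (next_block_anchor i (i * s + 1) g2'); auto; lia. }
  replace w with prefix_decode; [exact HA |].
  apply nth_ext with (d := false) (d' := false).
  - unfold prefix_decode, decode; rewrite length_map, length_seq; auto.
  - intros p Hp; unfold prefix_decode at 1, decode in Hp; rewrite length_map, length_seq in Hp.
    assert (Hi : p / s < n_blk n s) by (apply div_lt_div_ceil; lia).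
    destruct (Hblocks _ Hi (Hanchors _ Hi)) as [g2' [Hg2 Hb]].
    pose proof (Nat.div_mod p s ltac:(lia)); pose proof (Nat.mod_upper_bound p s ltac:(lia)).
    replace p with (p / s * s + p mod s) by lia.
    symmetry; apply (block_bits (p / s) (p / s * s + 1) g2'); auto.
    unfold block_len; lia.
Qed.

End Soundness.

Fixpoint nat_of_bits (bs : list bool) : nat :=
  match bs with
  | nil => 0
  | b :: bs' => Nat.b2n b + 2 * nat_of_bits bs'
  end.

Lemma nat_of_bits_lt bs : nat_of_bits bs < 2 ^ length bs.
Proof. induction bs as [|[|] bs IH]; simpl; lia. Qed.

Lemma testbit_nat_of_bits bs e : Nat.testbit (nat_of_bits bs) e = nth e bs false.
Proof.
  revert e; induction bs as [|b bs IH]; intros e; cbn [nat_of_bits].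
  - rewrite Nat.bits_0; destruct e; reflexivity.
  - destruct e as [|e]; [apply Nat.add_b2n_double_bit0 |].
    rewrite <- Nat.div2_bits, Nat.add_b2n_double_div2; apply IH.
Qed.

Lemma nth_map_seq {T : Type} (f : nat -> T) k p d : p < k -> nth p (map f (seq 0 k)) d = f p.
Proof.
  intros Hp; rewrite nth_indep with (d' := f 0) by (rewrite length_map, length_seq; auto).
  rewrite map_nth, seq_nth by auto; reflexivity.
Qed.

Lemma length_filter_ltb d r : length (filter (fun i => i <? d) (seq 0 r)) = Nat.min d r.
Proof.
  induction r as [|r IH]; [simpl; lia |].
  rewrite seq_S, filter_app, length_app, IH; simpl.
  destruct (Nat.ltb_spec r d); simpl; lia.
Qed.

Section Completeness.
Variables (n L s : nat) (A : list bool -> Prop) (w : list bool).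

Definition chunk_value (j : nat) : nat :=
  nat_of_bits (map (fun e => nth (j * L + e) w false) (seq 0 L)).

Lemma chunk_value_lt j : chunk_value j < 2 ^ L.
Proof.
  unfold chunk_value.
  pose proof (nat_of_bits_lt (map (fun e => nth (j * L + e) w false) (seq 0 L))) as H.
  rewrite length_map, length_seq in H; exact H.
Qed.

(* Reference positions 2, ..., 2^L; the digit of chunk j sits at position chunk_value j + 1,
   which has exactly chunk_value j reference positions at or below it. *)
Definition canonical_prefix (x : nat) : nat :=
  if x <? n_ref L then x + 2
  else if x <? n_ref L + n_dig n L then chunk_value (x - n_ref L) + 1
  else (x - n_ref L - n_dig n L) * s + 1.

Lemma canonical_prefix_ref i : i < n_ref L -> canonical_prefix i = i + 2.
Proof. intros Hi; unfold canonical_prefix; nat_cases; lia. Qed.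

Lemma canonical_prefix_dig j : j < n_dig n L -> canonical_prefix (dig_var L j) = chunk_value j + 1.
Proof. intros Hj; unfold canonical_prefix, dig_var; nat_cases; try lia; do 2 f_equal; lia. Qed.

Lemma canonical_prefix_blk i : canonical_prefix (blk_var n L i) = i * s + 1.
Proof. unfold canonical_prefix, blk_var; nat_cases; try lia; do 2 f_equal; lia. Qed.

Lemma canonical_prefix_range x :
  1 <= s -> 2 ^ L <= n -> x < n_pre n L s -> 1 <= canonical_prefix x <= n.
Proof.
  intros Hs HLn Hx; pose proof (chunk_value_lt (x - n_ref L)).
  unfold canonical_prefix, n_ref in *; nat_cases; try lia.
  assert (Hi : x - (2 ^ L - 1) - n_dig n L < n_blk n s) by (unfold n_pre, n_ref in Hx; lia).
  unfold n_blk in Hi; rewrite lt_div_ceil in Hi by lia; nia.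
Qed.

Lemma decode_canonical_prefix :
  1 <= L -> length w = n ->
  decode n L Nat.ltb canonical_prefix (fun j => canonical_prefix (dig_var L j)) = w.
Proof.
  intros HL Hw.
  apply nth_ext with (d := false) (d' := false); unfold decode.
  - rewrite length_map, length_seq; auto.
  - intros p Hp; rewrite length_map, length_seq in Hp; rewrite nth_map_seq by auto.
    assert (Hj : p / L < n_dig n L) by (apply div_lt_div_ceil; lia).
    pose proof (chunk_value_lt (p / L)).
    assert (Hdigit : digit_at L Nat.ltb canonical_prefix (canonical_prefix (dig_var L (p / L)))
                     = chunk_value (p / L)).
    { unfold digit_at; rewrite filter_ext_in with (g := fun i => i <? chunk_value (p / L)).
      - rewrite length_filter_ltb; unfold n_ref; lia.
      - intros i Hi; apply in_seq in Hi.
        rewrite canonical_prefix_dig, canonical_prefix_ref by lia; nat_cases; simpl; lia. }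
    rewrite Hdigit; unfold chunk_value; rewrite testbit_nat_of_bits.
    assert (p mod L < L) by (apply Nat.mod_upper_bound; lia).
    rewrite nth_map_seq by auto; f_equal.
    pose proof (Nat.div_mod p L); lia.
Qed.

Lemma completeness :
  1 <= L -> 1 <= s -> 2 ^ L <= n -> length w = n -> A w ->
  exists g1, (forall x, x < n_pre n L s -> 1 <= g1 x <= n) /\
    forall u, 1 <= u <= n -> exists g2,
      (forall x, n_pre n L s + 1 <= x < n_pre n L s + 1 + s -> 1 <= g2 x <= n) /\
      forall y, 1 <= y <= n -> prefix_matrix n L s A w g1 u g2 y.
Proof.
  intros HL Hs HLn Hw HA; exists canonical_prefix.
  split; [intros x; apply canonical_prefix_range; auto |].
  intros u Hu; exists (fun x => Nat.min (u + (x - (n_pre n L s + 1))) n).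
  split; [intros; lia |]; intros y Hy.
  unfold prefix_matrix, matrix, block_ok.
  rewrite decode_canonical_prefix, canonical_prefix_blk by auto.
  split; [exact HA | split; [apply Nat.eqb_eq; lia |]].
  intros i Hi Hsame; rewrite canonical_prefix_blk in Hsame; apply same_ltb in Hsame; subst u.
  pose proof (block_len_bounds n s Hs i Hi).
  assert (Hend : i * s + block_len n s i <= n) by (unfold block_len; apply lt_div_ceil in Hi; lia).
  unfold cur_var; split; [|split; [|split; [|split]]].
  - apply same_ltb; lia.
  - intros l Hl; apply adjacent_for_ltb; lia.
  - intros Hi1; rewrite canonical_prefix_blk, block_len_inner in * by auto.
    apply adjacent_for_ltb; apply lt_div_ceil in Hi1; nia.
  - intros Hlast; pose proof (block_len_last n s Hs i Hi Hlast); apply Nat.eqb_eq; lia.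
  - intros l Hl; f_equal; lia.
Qed.

End Completeness.

Lemma definable_with_n_vars n L s (A : list bool -> Prop) :
  1 <= L -> 1 <= s -> 2 ^ L <= n ->
  exists phi, sentence phi /\ quant_count phi = n_vars n L s /\
    forall w, length w = n -> holds w phi <-> A w.
Proof.
  intros HL Hs HLn.
  assert (Hn : 1 <= n) by (pose proof (Nat.pow_le_mono_r 2 1 L); simpl in *; lia).
  destruct (qf_definable _ _ (symbolic_matrix_local n L s A)) as [F [Hq [Hfree Hsat]]].
  exists (encoding_sentence n L s F); split; [|split].
  - apply sentence_encoding_sentence, Hfree.
  - apply quant_count_encoding_sentence, Hq.
  - intros w Hw; rewrite (holds_encoding_sentence n L s A F w HL Hs Hn Hsat), Hw; split.
    + intros [g1 [Hg1 H]]; apply (soundness n L s A w g1 Hs Hn Hw Hg1 H).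
    + exact (completeness n L s A w HL Hs HLn Hw).
Qed.

(** * Counting quantifiers *)

Lemma div_ceil_le n s m : n <= s * m -> (n + s - 1) / s <= m.
Proof.
  intros H; destruct s as [|s]; [simpl; lia |].
  apply Nat.lt_succ_r, Nat.Div0.div_lt_upper_bound; nia.
Qed.

Lemma n_vars_le_linear n L s : 1 <= L -> 1 <= s <= n -> 2 ^ L <= n -> n_vars n L s <= 4 * n + 2.
Proof.
  intros HL Hs HLn.
  assert (n_dig n L <= n) by (apply div_ceil_le; nia).
  assert (n_blk n s <= n) by (apply div_ceil_le; nia).
  unfold n_vars, n_pre, n_ref in *; lia.
Qed.

Lemma square_le_pow2 k : 4 <= k -> k * k <= 2 ^ k.
Proof.
  induction k as [|k IH]; intros Hk; [lia |].
  destruct (Nat.eq_dec k 3) as [->|Hk3]; [simpl; lia |].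
  rewrite Nat.pow_succ_r'; specialize (IH ltac:(lia)); nia.
Qed.

Lemma pow2_eventually_ge_linear K : exists k0, forall k, k0 <= k -> K * (k + 1) <= 2 ^ k.
Proof.
  exists (K + 4); intros k Hk; pose proof (square_le_pow2 k ltac:(lia)); nia.
Qed.

Section LargeParameters.
Variables (M k0 n : nat).
Hypotheses (HM : 1 <= M)
  (Hk0 : forall k, k0 <= k -> 6 * (4 * M + 2) * M * (k + 1) <= 2 ^ k)
  (Hlarge : 4 * M + (4 * M + 2) * k0 <= Nat.log2 n).

(* L = l - l/q with l = log2 n: close enough to log2 n for n/L, yet 2^L is about n^(1 - 1/q). *)
Definition large_L := Nat.log2 n - Nat.log2 n / (4 * M + 2).

Lemma large_L_facts :
  1 <= large_L /\ 2 ^ large_L <= n /\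
  2 * M * S (Nat.log2 n) <= (2 * M + 1) * large_L /\
  (n_ref large_L + n_blk n (2 ^ large_L) + 2 ^ large_L) * (2 * M * S (Nat.log2 n)) <= n.
Proof.
  assert (Hn : 2 ^ Nat.log2 n <= n < 2 ^ S (Nat.log2 n)).
  { apply Nat.log2_spec; destruct n as [|n']; [cbn in Hlarge; lia | lia]. }
  unfold large_L; set (l := Nat.log2 n) in *; set (q := 4 * M + 2) in *.
  assert (Hq : q <> 0) by (unfold q; lia).
  assert (Hqt : q * (l / q) <= l) by apply Nat.Div0.mul_div_le.
  assert (Hqt' : l < q * (l / q + 1)).
  { pose proof (Nat.div_mod l q Hq); pose proof (Nat.mod_upper_bound l q Hq); lia. }
  set (t := l / q) in *.
  assert (Ht : k0 <= t) by (apply Nat.div_le_lower_bound; unfold q in *; lia).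
  assert (Htl : t + 1 <= l - t) by (unfold q in Hqt; nia).
  assert (Hpow : 2 ^ t * 2 ^ (l - t) = 2 ^ l) by (rewrite <- Nat.pow_add_r; f_equal; lia).
  assert (Hmono : 2 ^ (t + 1) <= 2 ^ (l - t)) by (apply Nat.pow_le_mono_r; lia).
  assert (Hblk : n_blk n (2 ^ (l - t)) <= 2 ^ (t + 1)).
  { apply div_ceil_le; rewrite <- Nat.pow_add_r; replace (l - t + (t + 1)) with (S l) by lia; lia. }
  assert (Hbig := Hk0 t Ht).
  split; [lia | split; [pose proof (Nat.pow_le_mono_r 2 (l - t) l); lia | split]].
  - unfold q in Hqt; nia.
  - unfold n_ref.
    assert (S l <= q * (t + 1)) by lia.
    apply Nat.le_trans with (3 * 2 ^ (l - t) * (2 * M * (q * (t + 1)))).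
    { apply Nat.mul_le_mono; nia. }
    unfold q in *; nia.
Qed.

End LargeParameters.

Open Scope R_scope.

Lemma log2R_pos n : (2 <= n)%nat -> 0 < log2R (INR n).
Proof.
  intros Hn; unfold log2R; pose proof ln_lt_2.
  apply Rdiv_lt_0_compat; [| lra].
  rewrite <- ln_1; apply ln_increasing; [lra |].
  apply le_INR in Hn; simpl in Hn; lra.
Qed.

Lemma log2R_le_succ_log2 n : (1 <= n)%nat -> log2R (INR n) <= INR (S (Nat.log2 n)).
Proof.
  intros Hn; unfold log2R; pose proof ln_lt_2.
  assert (Hlt : ln (INR n) < ln (2 ^ S (Nat.log2 n))).
  { apply ln_increasing; [apply lt_0_INR; lia |].
    replace (2 ^ S (Nat.log2 n)) with (INR (2 ^ S (Nat.log2 n))) by (rewrite pow_INR; reflexivity).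
    apply lt_INR, Nat.log2_spec; lia. }
  rewrite ln_pow in Hlt by lra.
  apply Rmult_le_reg_r with (ln 2); [lra |].
  unfold Rdiv; rewrite Rmult_assoc, Rinv_l; lra.
Qed.

Lemma count_bound (n l L kt X M : nat) (eps g : R) :
  (1 <= L)%nat -> (1 <= M)%nat -> 1 <= INR M * eps -> 0 < g <= INR (S l) ->
  (kt * L <= n + L)%nat -> (2 * M * S l <= (2 * M + 1) * L)%nat ->
  (X * (2 * M * S l) <= n)%nat ->
  INR kt + INR X <= (1 + eps) * (INR n / g) + 1.
Proof.
  intros HL HM Hme [Hg Hgl] Hkt Hgap HX.
  apply le_INR in HL, HM, Hkt, Hgap, HX; repeat rewrite ?mult_INR, ?plus_INR in *.
  change (INR 1) with 1 in *; change (INR 2) with (1 + 1) in *.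
  assert (HN := pos_INR n).
  set (r := INR n / INR (S l)).
  assert (HNr : INR n = r * INR (S l)) by (unfold r; field; lra).
  assert (Hr : 0 <= r).
  { unfold r, Rdiv; apply Rmult_le_pos; [lra | left; apply Rinv_0_lt_compat; lra]. }
  assert (Hrg : r <= INR n / g).
  { unfold r, Rdiv; apply Rmult_le_compat_l; [lra | apply Rinv_le_contravar; lra]. }
  rewrite HNr in Hkt, HX.
  assert (Hkt' : 2 * INR M * INR kt <= r * (2 * INR M + 1) + 2 * INR M).
  { apply Rmult_le_reg_r with (INR L); nra. }
  assert (HX' : 2 * INR M * INR X <= r) by nra.
  assert (Hsum : INR kt + INR X <= r * (1 + / INR M) + 1).
  { apply Rmult_le_reg_l with (2 * INR M); [lra |].
    replace (2 * INR M * (r * (1 + / INR M) + 1)) with (r * (2 * INR M + 2) + 2 * INR M)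
      by (field; lra); lra. }
  assert (r * / INR M <= r * eps).
  { apply Rmult_le_compat_l; [lra |].
    apply Rmult_le_reg_l with (INR M); [lra |]; rewrite Rinv_r; lra. }
  nra.
Qed.

Lemma quantifier_budget eps : 0 < eps ->
  exists C, forall n, (2 <= n)%nat -> exists L, (1 <= L)%nat /\ (2 ^ L <= n)%nat /\
    INR (n_vars n L (2 ^ L)) <= (1 + eps) * (INR n / log2R (INR n)) + C.
Proof.
  intros Heps.
  destruct (INR_unbounded (/ eps)) as [M0 HM0].
  assert (HMe : 1 <= INR (S M0) * eps).
  { rewrite S_INR; apply Rmult_le_reg_r with (/ eps); [apply Rinv_0_lt_compat; lra |].
    rewrite Rmult_assoc, Rinv_r, Rmult_1_l, Rmult_1_r; lra. }
  set (M := S M0) in *; assert (HM : (1 <= M)%nat) by (unfold M; lia); clearbody M.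
  destruct (pow2_eventually_ge_linear (6 * (4 * M + 2) * M)) as [k0 Hk0].
  set (l0 := (4 * M + (4 * M + 2) * k0)%nat).
  exists (INR (4 * 2 ^ S l0 + 3)); intros n Hn.
  assert (Hlog := log2R_pos n Hn).
  assert (Hrate : 0 <= (1 + eps) * (INR n / log2R (INR n))).
  { apply Rmult_le_pos; [lra |]; unfold Rdiv; apply Rmult_le_pos; [apply pos_INR |].
    left; apply Rinv_0_lt_compat; lra. }
  assert (HC : 3 <= INR (4 * 2 ^ S l0 + 3)).
  { rewrite plus_INR; pose proof (pos_INR (4 * 2 ^ S l0)); simpl (INR 3); lra. }
  destruct (Nat.lt_ge_cases (Nat.log2 n) l0) as [Hsmall | Hlarge].
  - exists 1%nat; split; [lia | split; [simpl; lia |]].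
    assert ((2 ^ S (Nat.log2 n) <= 2 ^ S l0)%nat) by (apply Nat.pow_le_mono_r; lia).
    pose proof (Nat.log2_spec n ltac:(lia)).
    pose proof (n_vars_le_linear n 1 (2 ^ 1) ltac:(lia) ltac:(simpl; lia) ltac:(simpl; lia)).
    enough (INR (n_vars n 1 (2 ^ 1)) <= INR (4 * 2 ^ S l0 + 3)) by lra.
    apply le_INR; lia.
  - destruct (large_L_facts M k0 n HM Hk0 Hlarge) as [HL [HLn [Hgap Hrest]]].
    set (L := large_L M n) in *; exists L; split; [exact HL | split; [exact HLn |]].
    assert (Hdig : (n_dig n L * L <= n + L)%nat).
    { pose proof (Nat.Div0.mul_div_le (n + L - 1) L); unfold n_dig; lia. }
    pose proof (count_bound n (Nat.log2 n) L (n_dig n L) _ M eps (log2R (INR n)) HL HM HMe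
                  (conj Hlog (log2R_le_succ_log2 n ltac:(lia))) Hdig Hgap Hrest).
    replace (INR (n_vars n L (2 ^ L)))
      with (INR (n_dig n L) + INR (n_ref L + n_blk n (2 ^ L) + 2 ^ L) + 2)
      by (unfold n_vars, n_pre; rewrite !plus_INR; simpl; ring).
    lra.
Qed.

Theorem mainTheorem19 :
  forall eps : R, 0 < eps ->
  exists C : R,
  forall (n : nat), (2 <= n)%nat ->
  forall A B : list bool -> Prop,
    (forall w, A w -> length w = n) ->
    (forall w, B w -> length w = n) ->
    (forall w, A w -> ~ B w) ->
    exists phi : formula,
      sentence phi /\
      INR (quant_count phi) <= (1 + eps) * (INR n / log2R (INR n)) + C /\
      (forall w, A w -> holds w phi) /\
      (forall w', B w' -> ~ holds w' phi).
Proof.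
  intros eps Heps.
  destruct (quantifier_budget eps Heps) as [C HC]; exists C.
  intros n Hn A B HA HB Hdisj.
  destruct (HC n Hn) as [L [HL [HLn Hbudget]]].
  assert (Hs : (1 <= 2 ^ L)%nat) by (apply Nat.neq_0_lt_0, Nat.pow_nonzero; lia).
  destruct (definable_with_n_vars n L (2 ^ L) A HL Hs HLn) as [phi [Hsent [Hq Hsem]]].
  exists phi; split; [exact Hsent | split; [rewrite Hq; exact Hbudget | split]].
  - intros w Hw; apply Hsem; auto.
  - intros w Hw Hholds; apply Hsem in Hholds; [exact (Hdisj w Hholds Hw) | auto].
Qed.
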